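(* Let $\tilde{\mathbf{P}}\in\mathbb{R}^{n\times n}$ and let $\mathbf{X}\in\{0,1\}^{n\times n}$ be a binary matrix with weighted indicator matrix $\tilde{\mathbf{X}}$ such that for all $i,j\in[n]$, $\tilde{\mathbf{P}}_{ij}=\max_k\tilde{\mathbf{P}}_{ik}$ if and only if $\mathbf{X}_{ij}=1$. Then for all $\epsilon>0$ there exist $\delta>0$ and $b>0$ such that for every $\tilde{\mathbf{Q}}\in\mathbb{R}^{n\times n}$ with $\|\tilde{\mathbf{P}}-\tilde{\mathbf{Q}}\|_F<\delta$, $$\|\mathsf{softmax}(b\cdot\tilde{\mathbf{Q}})-\tilde{\mathbf{X}}\|_F<\epsilon,$$ where the softmax is applied row-wise.
   Context: For a binary vector $\mathbf{x}\in\{0,1\}^n$ with at least one nonzero entry, its weighted indicator vector is $\mathbf{x}/\sum_i x_i$. The weighted indicator matrix $\tilde{\mathbf{X}}$ of a binary matrix $\mathbf{X}$ has as $i$-th row the weighted indicator vector of the $i$-th row of $\mathbf{X}$. *)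

From mathcomp Require Import all_boot all_order all_algebra.
From mathcomp Require Import all_classical all_reals all_analysis.
Set Implicit Arguments. Unset Strict Implicit. Unset Printing Implicit Defensive.
Import Order.TTheory GRing.Theory Num.Theory.
Local Open Scope ring_scope.

Definition frob (R : realType) (m n : nat) (A : 'M[R]_(m, n)) : R :=
  Num.sqrt (\sum_(i < m) \sum_(j < n) A i j ^+ 2).

Definition softmax_rows (R : realType) (m n : nat) (A : 'M[R]_(m, n)) : 'M[R]_(m, n) :=
  \matrix_(i < m, j < n) (expR (A i j) / \sum_(k < n) expR (A i k)).

Definition weighted_indicator (R : realType) (m n : nat) (X : 'M[bool]_(m, n)) : 'M[R]_(m, n) :=
  \matrix_(i < m, j < n) ((X i j)%:R / (\sum_(k < n) (X i k)%:R)).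

Definition is_row_max (R : realType) (m n : nat) (P : 'M[R]_(m, n)) (i : 'I_m) (j : 'I_n) : Prop :=
  forall k : 'I_n, P i k <= P i j.

(* Let g > 0 be the smallest gap, over all rows, between the row maximum of P
   and a non-maximal entry.  If Q is entrywise delta-close to P, then in each
   row the entries of b Q at the maxima of P lie in an interval of width
   2 b delta, and all other entries lie at least b (g - 2 delta) below that
   interval.  After exponentiation the maximal entries get nearly equal weights
   and the others negligible ones, so each row of softmax (b Q) is entrywise
   close to the uniform distribution on the row maxima, i.e. to the row of the
   weighted indicator matrix.  It suffices to take b large first, and then
   delta small relative to 1 / b. *)

From mathcomp Require Import all_boot all_order all_algebra.
From mathcomp Require Import all_classical all_reals all_analysis.
From mathcomp Require Import ring lra.
Set Implicit Arguments. Unset Strict Implicit. Unset Printing Implicit Defensive.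
Import Order.TTheory GRing.Theory Num.Theory.
Local Open Scope ring_scope.

Section SoftmaxIndicator.
Variable R : realType.

Lemma fin_pos_lbound (T : finType) (p : pred T) (f : T -> R) :
  (forall t, p t -> 0 < f t) -> exists2 c, 0 < c & forall t, p t -> c <= f t.
Proof.
move=> fpos; case: (pickP p) => [t0 pt0 | p0]; last by exists 1 => // t; rewrite p0.
have [t pt tmin] := @arg_minP _ _ _ t0 p f pt0.
by exists (f t); [exact: fpos | exact: tmin].
Qed.

Lemma row_max_gap m n (P : 'M[R]_(m, n)) (X : 'M[bool]_(m, n)) :
  (forall i j, is_row_max P i j <-> X i j) ->
  exists2 g, 0 < g & forall i j k, X i j -> ~~ X i k -> g <= P i j - P i k.
Proof.
move=> HX.
have gap_pos (t : 'I_m * 'I_n * 'I_n) :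
    X t.1.1 t.1.2 && ~~ X t.1.1 t.2 -> 0 < P t.1.1 t.1.2 - P t.1.1 t.2.
  case: t => [[i j] k] /andP[/= xij xik].
  rewrite subr_gt0 lt_neqAle ((HX i j).2 xij k) andbT.
  apply: contra xik => /eqP Pkj; apply/(HX i k) => l.
  by rewrite Pkj; exact: (HX i j).2.
have [g g0 hg] := fin_pos_lbound gap_pos.
by exists g => // i j k xij xik; apply: (hg (i, j, k)); rewrite /= xij.
Qed.

Lemma entry_le_frob m n (A : 'M[R]_(m, n)) i j : `|A i j| <= frob A.
Proof.
have row_ge0 (F : 'I_n -> R) (p : pred 'I_n) : 0 <= \sum_(l | p l) F l ^+ 2.
  by rewrite sumr_ge0 // => l _; exact: sqr_ge0.
have rows_ge0 (p : pred 'I_m) : 0 <= \sum_(k | p k) \sum_l A k l ^+ 2.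
  by rewrite sumr_ge0 // => k _.
rewrite /frob -sqrtr_sqr ler_sqrt ?sqr_ge0 //.
by rewrite (bigD1 i) //= (bigD1 j) //= -addrA lerDl addr_ge0.
Qed.

Lemma frob_le_entrywise n (A : 'M[R]_n) (c : R) :
  0 <= c -> (forall i j, `|A i j| <= c) -> frob A <= n%:R * c.
Proof.
move=> c0 Ac; rewrite /frob -[_ * c]ger0_norm ?mulr_ge0 // -sqrtr_sqr ler_sqrt ?sqr_ge0 //.
apply: (@le_trans _ _ (\sum_(i < n) \sum_(j < n) c ^+ 2)).
  apply: ler_sum => i _; apply: ler_sum => j _.
  by rewrite -real_normK ?num_real // lerXn2r ?nnegrE.
by rewrite !sumr_const card_ord -mulrnA mulnn exprMn -natrX mulr_natl.
Qed.

Lemma normalized_weight_near_uniform (I : finType) (u : I -> R) (S : pred I)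
    (L U rho eta : R) (j0 : I) :
  S j0 -> 0 < L -> 0 <= rho -> (forall k, 0 < u k) ->
  (forall k, S k -> L <= u k <= U) -> (forall k, ~~ S k -> u k <= rho) ->
  U + #|I|%:R * rho <= (1 + eta) * L -> rho <= eta * L ->
  forall j, `|u j / (\sum_k u k) - (S j)%:R / (\sum_k (S k)%:R)| <= eta.
Proof.
move=> Sj0 L0 rho0 u0 uS unS hU hrho j.
set s := \sum_k ((S k)%:R : R); set T := \sum_k u k.
(* Everything follows from s * L <= T <= s * (1 + eta) * L and L <= T. *)
have s1 : 1 <= s by rewrite /s (bigD1 j0) //= Sj0 lerDl sumr_ge0.
have sL_T : s * L <= T.
  rewrite /s /T mulr_suml; apply: ler_sum => k _.
  by case: (boolP (S k)) => [/uS/andP[]|_]; rewrite ?mul1r ?mul0r ?(ltW (u0 k)).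
have T_sU : T <= s * U + #|I|%:R * rho.
  have -> : #|I|%:R * rho = \sum_(k : I) rho by rewrite sumr_const mulr_natl.
  rewrite /s /T mulr_suml -big_split /=.
  apply: ler_sum => k _; case: (boolP (S k)) => [/uS/andP[_ ukU]|/unS ukr].
    by rewrite mul1r; lra.
  by rewrite mul0r add0r.
have Nrho0 : 0 <= #|I|%:R * rho by rewrite mulr_ge0.
have T0 : 0 < T by nra.
have eta0 : 0 <= eta by nra.
have T_hi : T <= s * ((1 + eta) * L).
  have : 0 <= (s - 1) * (#|I|%:R * rho) by rewrite mulr_ge0 ?subr_ge0.
  nra.
case: (boolP (S j)) => [Sj | nSj].
  have /andP[Luj ujU] := uS j Sj.
  have -> : u j / T - 1%:R / s = (s * u j - T) / (s * T).
    by field; rewrite !gt_eqF //; lra.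
  have sT0 : 0 < s * T by rewrite mulr_gt0 //; lra.
  rewrite normrM (gtr0_norm (_ : 0 < (s * T)^-1)) ?invr_gt0 // ler_pdivrMr //.
  have L_T : L <= T by nra.
  have suj_le_sU : 0 <= s * (U - u j) by rewrite mulr_ge0 ?subr_ge0 //; lra.
  have sU_le_s1etaL : 0 <= s * ((1 + eta) * L - U).
    by rewrite mulr_ge0 ?subr_ge0 //; lra.
  have esL_le_esT : 0 <= eta * s * (T - L) by rewrite !mulr_ge0 ?subr_ge0 //; lra.
  have sL_le_suj : 0 <= s * (u j - L) by rewrite mulr_ge0 ?subr_ge0 //; lra.
  rewrite ler_norml; apply/andP; split; nra.
rewrite mul0r subr0 ger0_norm ?divr_ge0 ?(ltW (u0 j)) ?(ltW T0) // ler_pdivrMr //.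
have := unS j nSj; nra.
Qed.

Lemma softmax_near_indicator (I : finType) (q : I -> R) (S : pred I)
    (b lo w h eta : R) (j0 : I) :
  S j0 -> 0 <= b ->
  (forall k, S k -> lo <= q k <= lo + w) -> (forall k, ~~ S k -> q k <= lo - h) ->
  expR (b * w) + #|I|%:R * expR (- (b * h)) <= 1 + eta ->
  expR (- (b * h)) <= eta ->
  forall j, `|expR (b * q j) / (\sum_k expR (b * q k)) - (S j)%:R / (\sum_k (S k)%:R)|
    <= eta.
Proof.
move=> Sj0 b0 qS qnS hw hh.
apply: (normalized_weight_near_uniform (L := expR (b * lo))
  (U := expR (b * lo) * expR (b * w)) (rho := expR (b * lo) * expR (- (b * h))) Sj0).
- exact: expR_gt0.
- by rewrite mulr_ge0 ?expR_ge0.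
- by move=> k; exact: expR_gt0.
- move=> k /qS/andP[lo_q q_hi]; rewrite -expRD !ler_expR -mulrDr.
  by rewrite !ler_wpM2l.
- move=> k /qnS q_lo; rewrite -expRD ler_expR; nra.
- by rewrite mulrCA -mulrDr mulrC ler_pM2r ?expR_gt0.
- by rewrite mulrC ler_pM2r ?expR_gt0.
Qed.

Lemma softmax_rows_near_indicator m n (P Q : 'M[R]_(m, n)) (X : 'M[bool]_(m, n))
    (g b delta eta : R) :
  (forall i j, is_row_max P i j <-> X i j) ->
  (forall i j k, X i j -> ~~ X i k -> g <= P i j - P i k) ->
  0 <= b -> (forall i k, `|P i k - Q i k| <= delta) ->
  expR (b * (2 * delta)) + n%:R * expR (- (b * (g - 2 * delta))) <= 1 + eta ->
  expR (- (b * (g - 2 * delta))) <= eta ->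
  forall i j, `|(softmax_rows (b *: Q) - weighted_indicator R X) i j| <= eta.
Proof.
move=> HX gap b0 PQ hw hh i j; rewrite !mxE; under eq_bigr do rewrite mxE.
have [j0 _ j0_max] := @arg_maxP _ _ _ j xpredT (P i) isT.
have xj0 : X i j0 by apply/(HX i j0) => k; exact: j0_max.
rewrite -(card_ord n) in hw.
apply: (softmax_near_indicator (lo := P i j0 - delta) xj0 b0 _ _ hw hh).
- move=> k xk; have := PQ i k; rewrite ler_norml.
  have -> : P i k = P i j0 by apply/le_anti/andP; split; [exact: j0_max | exact: (HX i k).2].
  by move=> /andP[? ?]; apply/andP; split; lra.
- move=> k nxk; have := gap i j0 k xj0 nxk; have := PQ i k; rewrite ler_norml.
  by move=> /andP[? ?] ?; lra.
Qed.

Lemma softmax_parameters (N g eta : R) : 0 <= N -> 0 < g -> 0 < eta ->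
  exists b, exists delta, [/\ 0 < b, 0 < delta,
    expR (b * (2 * delta)) + N * expR (- (b * (g - 2 * delta))) <= 1 + eta &
    expR (- (b * (g - 2 * delta))) <= eta].
Proof.
move=> N0 g0 eta0.
set r := eta / (2 * (N + 1)).
have r0 : 0 < r by rewrite divr_gt0 // mulr_gt0 //; lra.
have Nr : N * r <= eta / 2.
  by rewrite /r mulrA ler_pdivrMr ?mulr_gt0 //; nra.
have r_eta : r <= eta by rewrite /r ler_pdivrMr ?mulr_gt0 //; nra.
set b := 2 * (`|ln r| + 1) / g.
have b0 : 0 < b by rewrite divr_gt0 // mulr_gt0 // ltr_wpDl.
set l := ln (1 + eta / 2).
have l0 : 0 < l by apply: ln_gt0; lra.
set delta := Num.min (g / 4) (l / (2 * b)).
(* b makes expR (- (b * (g / 2))) <= r; delta <= g / 4 then keeps the gap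
   above g / 2, and delta <= l / (2 b) keeps the spread below 1 + eta / 2. *)
have delta0 : 0 < delta by rewrite lt_min !divr_gt0 // mulr_gt0.
have delta_g : delta <= g / 4 by rewrite ge_min lexx.
have delta_l : b * (2 * delta) <= l.
  have b2 : 0 < 2 * b by lra.
  have -> : b * (2 * delta) = delta * (2 * b) by ring.
  by rewrite -ler_pdivlMr // ge_min lexx orbT.
have tail_r : expR (- (b * (g - 2 * delta))) <= r.
  rewrite -[X in _ <= X](@lnK R r) ?posrE // ler_expR.
  have -> : ln r = - (- ln r) by rewrite opprK.
  rewrite lerN2 (le_trans (ler_norm _)) // normrN.
  have bg : b * (g / 2) = `|ln r| + 1 by rewrite /b; field; rewrite gt_eqF.
  have : b * (g / 2) <= b * (g - 2 * delta) by rewrite ler_pM2l //; lra.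
  lra.
have head : expR (b * (2 * delta)) <= 1 + eta / 2.
  by rewrite -[X in _ <= X](@lnK R (1 + eta / 2)) ?posrE ?ler_expR //; lra.
exists b, delta; split => //; last exact: le_trans r_eta.
have : N * expR (- (b * (g - 2 * delta))) <= N * r by rewrite ler_wpM2l.
lra.
Qed.

End SoftmaxIndicator.

Theorem lemmaF3 (R : realType) (n : nat) (P : 'M[R]_n) (X : 'M[bool]_n) :
  (forall i j : 'I_n, is_row_max P i j <-> X i j = true) ->
  forall eps : R, 0 < eps ->
  exists delta : R, exists b : R, 0 < delta /\ 0 < b /\
    forall Q : 'M[R]_n, frob (P - Q) < delta ->
      frob (softmax_rows (b *: Q) - weighted_indicator R X) < eps.
Proof.
move=> HX eps eps0.
have [g g0 gap] := row_max_gap HX.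
set eta := eps / n.+1%:R.
have eta0 : 0 < eta by rewrite divr_gt0.
have [b [delta [b0 delta0 hw hh]]] := softmax_parameters (ler0n R n) g0 eta0.
exists delta, b; split => //; split => // Q hQ.
have PQ i k : `|P i k - Q i k| <= delta.
  by have := entry_le_frob (P - Q) i k; rewrite !mxE => /le_trans; apply; exact: ltW.
have entries := softmax_rows_near_indicator HX gap (ltW b0) PQ hw hh.
apply: le_lt_trans (frob_le_entrywise (ltW eta0) entries) _.
by rewrite /eta mulrA ltr_pdivrMr ?ltr0Sn // mulrC ltr_pM2l // ltr_nat.
Qed.
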